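(* For every $p,q\in\mathbb{N}$ with $p/q\ge2$, we have $\overline{\xi_f}(E_{p/q})=p/q$.
   Context: For $p,q\in\mathbb{N}$ with $p/q\ge2$, the fraction graph $E_{p/q}$ has vertex set $\mathbb{Z}_p=\{0,1,\dots,p-1\}$, and distinct vertices $i,j$ are adjacent iff their cyclic distance $\min(|i-j|, p-|i-j|)$ is strictly less than $q$ (the graph depends on the pair $(p,q)$). For a graph $G$, the complement of the projective rank $\overline{\xi_f}(G)$ is the infimum of $d/r$ over all $d,r\in\mathbb{N}$ for which there is an assignment of $r$-dimensional subspaces $W_v\le\mathbb{C}^d$ to the vertices $v$ of $G$ such that distinct non-adjacent vertices receive orthogonal subspaces. *)

From HB Require Import structures.
From mathcomp Require Import all_boot all_order all_algebra.
From mathcomp Require Import complex.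
From mathcomp Require Import Rstruct.
Set Implicit Arguments. Unset Strict Implicit. Unset Printing Implicit Defensive.
Import Order.TTheory GRing.Theory Num.Theory.
Local Open Scope ring_scope.

Definition CC : Type := (Rdefinitions.R)[i].

Definition cycdist (p i j : nat) : nat :=
  minn (if (i <= j)%N then j - i else i - j)%N (p - (if (i <= j)%N then j - i else i - j))%N.

(* Fraction graph E_{p/q} on vertex set Z_p = 'I_p:
   distinct i, j adjacent iff cyclic distance < q. *)
Definition frac_adj (p q : nat) (i j : 'I_p) : bool :=
  (i != j) && (cycdist p i j < q)%N.

Definition ctrmx (m n : nat) (A : 'M[CC]_(m, n)) : 'M[CC]_(n, m) :=
  (map_mx (fun z : CC => z^*) A)^T.

(* A d/r-representation (for the complement of projective rank) of E_{p/q}: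
   each vertex v gets an r-dimensional subspace W_v of C^d, given as the row
   space of an r x d matrix of rank r; distinct non-adjacent vertices get
   orthogonal subspaces w.r.t. the standard Hermitian inner product. *)
Definition frac_orth_rep (p q d r : nat) (W : 'I_p -> 'M[CC]_(r, d)) : Prop :=
  (forall v, \rank (W v) = r) /\
  (forall u v, u != v -> ~~ @frac_adj p q u v -> W u *m ctrmx (W v) = 0).

Definition cxif_ratios (p q : nat) (x : rat) : Prop :=
  exists (d r : nat), (0 < d)%N /\ (0 < r)%N /\ x = d%:R / r%:R /\
    exists W : 'I_p -> 'M[CC]_(r, d), @frac_orth_rep p q d r W.

Definition is_infimum (S : Rdefinitions.R -> Prop) (c : Rdefinitions.R) : Prop :=
  (forall x, S x -> c <= x) /\
  (forall c', (forall x, S x -> c' <= x) -> c' <= c).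

(* complement of projective rank of E_{p/q} equals c *)
Definition cxif_frac_eq (p q : nat) (c : Rdefinitions.R) : Prop :=
  is_infimum (fun x => exists y : rat, cxif_ratios p q y /\ x = ratr y) c.

(* The ratio p/q is attained by giving vertex i the span of the coordinate vectors
   e_i, ..., e_(i+q-1) (indices mod p) of C^p.  Conversely, let V_0, ..., V_(p-1) be
   subspaces of C^d such that V_i and V_j are orthogonal whenever i and j are at cyclic
   distance at least q; we show that the dimensions of the V_i add up to at most q d.
   After dividing p and q by their gcd, induct on q through the Farey neighbours
   c/e > p/q > a/b, where p = a + c, q = b + e and cq - ep = bp - aq = 1.  Sampling V at
   floor(jp/c) for 0 < j < c, with V_(p-1) ∩ V_0 at 0, gives such a family for c/e, and
   sampling at floor(jp/a), with V_(p-1) + V_0 at 0, gives one for a/b.  Together the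
   samples hit every vertex 1, ..., p-2, and dim (V_(p-1) ∩ V_0) + dim (V_(p-1) + V_0) =
   dim V_(p-1) + dim V_0, so the total dimension is at most e d + b d = q d. *)

From mathcomp Require Import all_boot all_order all_algebra.
From mathcomp Require Import complex Rstruct zify.
Import GRing.Theory Num.Theory.
Set Implicit Arguments. Unset Strict Implicit. Unset Printing Implicit Defensive.

Section Orthogonality.
Local Open Scope ring_scope.
Variable d : nat.
Implicit Types (m n : nat).

Lemma ctrmxM m n k (A : 'M[CC]_(m, n)) (B : 'M[CC]_(n, k)) :
  ctrmx (A *m B) = ctrmx B *m ctrmx A.
Proof. by rewrite /ctrmx map_mxM trmx_mul. Qed.

Lemma ctrmxK m n (A : 'M[CC]_(m, n)) : ctrmx (ctrmx A) = A.
Proof. by apply/matrixP=> i j; rewrite !mxE conjCK. Qed.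

Definition orth m n (X : 'M[CC]_(m, d)) (Y : 'M[CC]_(n, d)) : Prop :=
  X *m ctrmx Y = 0.

Lemma orthP m n (X : 'M[CC]_(m, d)) (Y : 'M[CC]_(n, d)) :
  reflect (orth X Y) (X <= kermx (ctrmx Y))%MS.
Proof. exact: sub_kermxP. Qed.

Lemma orth_sym m n (X : 'M[CC]_(m, d)) (Y : 'M[CC]_(n, d)) : orth X Y -> orth Y X.
Proof.
rewrite /orth => XY; rewrite -[Y]ctrmxK -ctrmxM XY.
by apply/matrixP=> i j; rewrite !mxE conjC0.
Qed.

Lemma orth_submxl m m' n (X : 'M[CC]_(m, d)) (X' : 'M[CC]_(m', d)) (Y : 'M[CC]_(n, d)) :
  (X' <= X)%MS -> orth X Y -> orth X' Y.
Proof. by move=> sX'X /orthP; move/(submx_trans sX'X)/orthP. Qed.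

Lemma orth_submxr m n n' (X : 'M[CC]_(m, d)) (Y : 'M[CC]_(n, d)) (Y' : 'M[CC]_(n', d)) :
  (Y' <= Y)%MS -> orth X Y -> orth X Y'.
Proof. by move=> sY'Y /orth_sym/(orth_submxl sY'Y)/orth_sym. Qed.

Lemma orth_addsmxl m1 m2 n (X1 : 'M[CC]_(m1, d)) (X2 : 'M[CC]_(m2, d)) (Y : 'M[CC]_(n, d)) :
  orth X1 Y -> orth X2 Y -> orth (X1 + X2)%MS Y.
Proof. by move=> /orthP X1Y /orthP X2Y; apply/orthP; rewrite addsmx_sub X1Y. Qed.

(* The diagonal of [Z *m ctrmx Z] holds the squared norms of the rows of [Z]. *)
Lemma orth_self_eq0 m (Z : 'M[CC]_(m, d)) : orth Z Z -> Z = 0.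
Proof.
move=> ZZ; apply/matrixP=> i j; rewrite mxE.
have /eqP := congr1 (fun M : 'M_m => M i i) ZZ; rewrite !mxE.
rewrite psumr_eq0 => [/allP/(_ j (mem_index_enum _))|k _]; last first.
  by rewrite !mxE mul_conjC_ge0.
by rewrite !mxE mul_conjC_eq0 => /eqP.
Qed.

Lemma rank_addsmx_orth m n (X : 'M[CC]_(m, d)) (Y : 'M[CC]_(n, d)) :
  orth X Y -> \rank (X + Y)%MS = (\rank X + \rank Y)%N.
Proof.
move=> XY; apply: mxrank_disjoint_sum; apply: orth_self_eq0.
by apply: (orth_submxl (capmxSl X Y)); apply: orth_submxr XY; apply: capmxSr.
Qed.

Lemma sum_rank_orth n (f : nat -> 'M[CC]_d) :
  (forall i j, (i < j < n)%N -> orth (f i) (f j)) ->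
  (\sum_(0 <= i < n) \rank (f i) <= d)%N.
Proof.
move=> orth_f; suff -> : (\sum_(0 <= i < n) \rank (f i) = \rank (\sum_(0 <= i < n) f i)%MS)%N.
  exact: rank_leq_col.
elim: n orth_f => [|n IHn] orth_f; first by rewrite !big_geq ?mxrank0.
rewrite !big_nat_recr //= rank_addsmx_orth.
  by rewrite IHn // => i j /andP[ij jn]; apply: orth_f; rewrite ij ltnW.
apply/orthP; rewrite big_nat_cond.
apply: (big_ind (fun S => S <= kermx (ctrmx (f n)))%MS) => [|S T SK TK|i].
- exact: sub0mx.
- by rewrite addsmx_sub SK.
- by rewrite andbT => /andP[_ ilt]; apply/orthP/orth_f; rewrite ilt /=.
Qed.
End Orthogonality.

Lemma coprime_of_mul_eq_add1 a b c d : a * b = c * d + 1 -> coprime a c.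
Proof.
move=> E; rewrite /coprime -dvdn1 -(dvdn_addr 1 (dvdn_mulr d (dvdn_gcdr a c))) -E.
exact: dvdn_mulr (dvdn_gcdl a c).
Qed.

Lemma divn_between m d v : 0 < d -> v * d <= m < v.+1 * d -> m %/ d = v.
Proof.
move=> d0 /andP[lo hi]; apply/eqP; rewrite eqn_leq -ltnS ltn_divLR // hi /=.
by rewrite leq_divRL.
Qed.

Lemma modn_mul_gt0 p c k : coprime c p -> 0 < k < c -> 0 < k * p %% c.
Proof.
move=> cop_cp /andP[k_gt0 k_lt]; rewrite lt0n; apply: contraTneq k_lt => /eqP.
by rewrite -/(dvdn c (k * p)) Gauss_dvdl // => /(dvdn_leq k_gt0); rewrite -leqNgt.
Qed.

Lemma floor_gap_upper p q c e i j :
  c * q = e * p + 1 -> 0 < i -> i <= j < c -> e <= j - i <= c - e ->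
  q <= j * p %/ c - i * p %/ c <= p - q.
Proof.
move=> cqE i_gt0 /andP[ij j_lt] /andP[lo hi].
have q_gt0 : 0 < q by move: cqE; case: q => //; rewrite muln0 addn1.
have c_gt0 : 0 < c by move: cqE {j_lt hi}; case: c => //; rewrite mul0n addn1.
have cop_cp : coprime c p by apply: (@coprime_of_mul_eq_add1 _ q _ e); rewrite cqE mulnC.
have r0 : 0 < i * p %% c by rewrite modn_mul_gt0 // i_gt0 (leq_ltn_trans ij j_lt).
have s0 : 0 < j * p %% c by rewrite modn_mul_gt0 // j_lt (leq_trans i_gt0 ij).
have cq : c <= c * q by rewrite leq_pmulr.
have jp_lo : e * p <= j * p - i * p by rewrite -mulnBl leq_mul2r lo orbT.
have jp_hi : j * p - i * p <= c * p - e * p by rewrite -!mulnBl leq_mul2r hi orbT.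
move: r0 s0 (ltn_pmod (i * p) c_gt0) (ltn_pmod (j * p) c_gt0) (divn_eq (i * p) c) (divn_eq (j * p) c).
move: (i * p %/ c) (j * p %/ c) (i * p %% c) (j * p %% c) => x y r s r0 s0 rc sc Ex Ey.
rewrite Ex Ey in jp_lo jp_hi.
have gap_lo : q * c < (y - x).+1 * c by rewrite mulSn mulnBl; lia.
have gap_hi : (y - x) * c < (p - q).+1 * c by rewrite mulnBl mulSn mulnBl; lia.
by rewrite ltn_pmul2r // in gap_lo; rewrite ltn_pmul2r // in gap_hi; lia.
Qed.

Lemma floor_gap_lower p q a b i j :
  b * p = a * q + 1 -> b <= j - i <= a - b ->
  q <= j * p %/ a - i * p %/ a <= p - q.
Proof.
move=> bpE /andP[lo hi].
have a_gt0 : 0 < a by case: a bpE hi => // bpE hi; nia.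
have jp_lo : b * p <= j * p - i * p by rewrite -mulnBl leq_mul2r lo orbT.
have jp_hi : j * p - i * p <= a * p - b * p by rewrite -!mulnBl leq_mul2r hi orbT.
move: (ltn_pmod (i * p) a_gt0) (ltn_pmod (j * p) a_gt0) (divn_eq (i * p) a) (divn_eq (j * p) a).
move: (i * p %/ a) (j * p %/ a) (i * p %% a) (j * p %% a) => x y r s ra sa Ex Ey.
rewrite Ex Ey in jp_lo jp_hi.
have gap_lo : q * a < (y - x).+1 * a by rewrite mulSn mulnBl; lia.
have gap_hi : (y - x) * a < (p - q).+1 * a by rewrite mulnBl mulSn mulnBl; lia.
by rewrite ltn_pmul2r // in gap_lo; rewrite ltn_pmul2r // in gap_hi; lia.
Qed.

Lemma floor_upper_zero p q c e j :
  c * q = e * p + 1 -> 1 < c -> e <= j <= c - e -> q.-1 <= j * p %/ c <= p - q.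
Proof.
move=> cqE c_gt1 /andP[lo hi]; have c_gt0 : 0 < c := ltnW c_gt1.
have jp_lo : e * p <= j * p by rewrite leq_mul2r lo orbT.
have jp_hi : j * p <= c * p - e * p by rewrite -mulnBl leq_mul2r hi orbT.
move: (ltn_pmod (j * p) c_gt0) (divn_eq (j * p) c).
move: (j * p %/ c) (j * p %% c) => y s sc Ey; rewrite Ey in jp_lo jp_hi.
have y_lo : q * c < y.+2 * c by rewrite !mulSn; lia.
have y_hi : y * c < (p - q).+1 * c by rewrite mulSn mulnBl; lia.
by rewrite ltn_pmul2r // in y_lo; rewrite ltn_pmul2r // in y_hi; lia.
Qed.

Lemma floor_lower_zero p q a b j :
  b * p = a * q + 1 -> b <= j <= a - b -> q <= j * p %/ a < p - q.
Proof.
move=> bpE /andP[lo hi].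
have a_gt0 : 0 < a by case: a bpE hi => // bpE hi; nia.
have jp_lo : b * p <= j * p by rewrite leq_mul2r lo orbT.
have jp_hi : j * p <= a * p - b * p by rewrite -mulnBl leq_mul2r hi orbT.
move: (ltn_pmod (j * p) a_gt0) (divn_eq (j * p) a).
move: (j * p %/ a) (j * p %% a) => y s sa Ey; rewrite Ey in jp_lo jp_hi.
have y_lo : q * a < y.+1 * a by rewrite mulSn; lia.
have y_hi : y * a < (p - q) * a by rewrite mulnBl; lia.
by rewrite ltn_pmul2r // in y_lo; rewrite ltn_pmul2r // in y_hi; lia.
Qed.

(* A finite form of the Rayleigh–Beatty theorem for the complementary ratios [p/c] and [p/a]. *)
Lemma floor_cover p a c v :
  a + c = p -> coprime p c -> 0 < a -> 0 < c -> 0 < v -> v.+2 <= p ->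
  (exists2 j, 0 < j < c & j * p %/ c = v) \/ (exists2 j, 0 < j < a & j * p %/ a = v).
Proof.
move=> acp cop_pc a0 c0 v0 vp; have p0 : 0 < p by lia.
move: (divn_eq (v * c + c - 1) p) (ltn_pmod (v * c + c - 1) p0).
move: ((v * c + c - 1) %/ p) ((v * c + c - 1) %% p) => k r Ek rp.
case: (leqP (v * c) (k * p)) => vk.
  left; exists k; first nia.
  by apply: divn_between => //; apply/andP; split; nia.
have k_ne : k.+1 * p != v.+1 * c.
  apply/eqP => E; have : p %| v.+1 * c by rewrite -E dvdn_mull.
  by rewrite Gauss_dvdl // => /dvdn_leq; lia.
have kv : k <= v by nia.
right; exists (v - k); first nia.
by apply: divn_between => //; rewrite mulnBl; apply/andP; split; nia.
Qed.

Lemma leq_sum_floor_cover (g : nat -> nat) p a c :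
  a + c = p -> coprime p c -> 0 < a -> 0 < c ->
  \sum_(1 <= v < p.-1) g v <=
  \sum_(1 <= j < c) g (j * p %/ c) + \sum_(1 <= j < a) g (j * p %/ a).
Proof.
move=> acp cop_pc a0 c0.
set s1 := [seq j * p %/ c | j <- index_iota 1 c]; set s2 := [seq j * p %/ a | j <- index_iota 1 a].
have -> : \sum_(1 <= j < c) g (j * p %/ c) + \sum_(1 <= j < a) g (j * p %/ a) =
          \sum_(v <- s1 ++ s2) g v by rewrite big_cat !big_map.
apply: sub_le_big_seq; [exact: leqnn | by move=> x y; apply: leq_addr | move=> v].
rewrite count_uniq_mem ?iota_uniq // mem_index_iota.
case/boolP: (0 < v < p.-1) => [/andP[v0 vp]|_] //.
have vp2 : v.+2 <= p by lia.
rewrite -has_count has_pred1 mem_cat; apply/orP.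
have [[j jc <-]|[j ja <-]] := floor_cover acp cop_pc a0 c0 v0 vp2.
- by left; apply: map_f; rewrite mem_index_iota.
- by right; apply: map_f; rewrite mem_index_iota.
Qed.

Lemma farey_neighbour p q : 1 < q -> coprime p q ->
  exists c e, c * q = e * p + 1 /\ 0 < e < q.
Proof.
move=> q_gt1 cop_pq; have [e e_lt_q] := Bezoutl p (ltnW q_gt1).
rewrite gcdnC (eqP cop_pq) => /dvdnP[c cqE].
exists c, e; split; first by rewrite -cqE addnC.
rewrite e_lt_q andbT lt0n; apply/eqP => e0; move: cqE q_gt1; rewrite e0 addn0.
by move=> /esym/eqP; rewrite muln_eq1 => /andP[_ /eqP->].
Qed.

Lemma cycdistC p i j : cycdist p i j = cycdist p j i.
Proof. by rewrite /cycdist; case: (leqP i j); case: (leqP j i); lia. Qed.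

Lemma leq_cycdist p q i j :
  i <= j < p -> (q <= cycdist p i j) = (q <= j - i <= p - q).
Proof. by move=> /andP[ij jp]; rewrite /cycdist ij leq_min; apply/idP/idP; lia. Qed.

Lemma cycdist_mulr p i j g : cycdist (p * g) (i * g) (j * g) = cycdist p i j * g.
Proof.
rewrite /cycdist leq_mul2r; case: (posnP g) => [->|g0]; first by rewrite !muln0.
by case: (leqP i j) => _; rewrite -!mulnBl minnMl.
Qed.

Definition cyc_orth d p q (f : nat -> 'M[CC]_d) : Prop :=
  forall i j, i < p -> j < p -> q <= cycdist p i j -> orth (f i) (f j).

Section CyclicOrthogonality.
Variables (d p q : nat) (f : nat -> 'M[CC]_d).

Lemma cyc_orth_gap i j :
  cyc_orth p q f -> i <= j < p -> q <= j - i <= p - q -> orth (f i) (f j).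
Proof.
move=> f_orth /andP[ij jp] gap; apply: f_orth; rewrite ?leq_cycdist ?ij //.
exact: leq_ltn_trans ij jp.
Qed.

Lemma cyc_orth_of_gap :
  (forall i j, i <= j < p -> q <= j - i <= p - q -> orth (f i) (f j)) -> cyc_orth p q f.
Proof.
move=> gap_orth i j ip jp; case: (leqP i j) => [ij|ji].
  by rewrite leq_cycdist ?ij //; apply: gap_orth; rewrite ij.
rewrite cycdistC leq_cycdist ?ip ?(ltnW ji) // => gap.
by apply: orth_sym; apply: gap_orth; rewrite ?ip ?(ltnW ji).
Qed.

End CyclicOrthogonality.

Definition sample d (f : nat -> 'M[CC]_d) p c (Z : 'M[CC]_d) (j : nat) : 'M[CC]_d :=
  if j == 0 then Z else f (j * p %/ c).

Lemma sample_gt0 d (f : nat -> 'M[CC]_d) p c Z j :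
  0 < j -> sample f p c Z j = f (j * p %/ c).
Proof. by rewrite /sample lt0n => /negbTE->. Qed.

Lemma sum_rank_sample d (f : nat -> 'M[CC]_d) p c Z :
  0 < c -> \sum_(0 <= j < c) \rank (sample f p c Z j) =
           \rank Z + \sum_(1 <= j < c) \rank (f (j * p %/ c)).
Proof.
move=> c0; rewrite big_ltn //; congr addn.
by apply: eq_big_nat => j /andP[j0 _]; rewrite sample_gt0.
Qed.

Section FareySplit.
Variables (d p q c e : nat) (f : nat -> 'M[CC]_d).
Hypotheses (cqE : c * q = e * p + 1) (e_gt0 : 0 < e) (e_lt_q : e < q) (c_lt_p : c < p).
Hypotheses (two_q_lt_p : 2 * q < p) (f_orth : cyc_orth p q f).

Lemma cyc_orth_sample_cap : cyc_orth c e (sample f p c (f p.-1 :&: f 0)%MS).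
Proof.
apply: cyc_orth_of_gap => i j /andP[ij j_lt] gap.
have j_gt0 : 0 < j by lia.
have y_lt : j * p %/ c < p by rewrite ltn_divLR; nia.
rewrite [sample _ _ _ _ j]sample_gt0 //.
have [i0 | i_gt0] := posnP i; last first.
  rewrite sample_gt0 //; apply: cyc_orth_gap f_orth _ _.
    by rewrite y_lt andbT leq_div2r // leq_mul2r ij orbT.
  by apply: floor_gap_upper cqE i_gt0 _ gap; rewrite ij.
rewrite i0 subn0 in gap *; rewrite /sample /=.
have c_gt1 : 1 < c by nia.
have /andP[y_lo y_hi] := floor_upper_zero cqE c_gt1 gap.
(* The sample of [j] is far from [0] or from [p - 1], hence orthogonal to the intersection. *)
have [q_le_y | y_lt_q] := leqP q (j * p %/ c).
  apply: orth_submxl (capmxSr _ _) _.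
  by apply: cyc_orth_gap f_orth _ _; rewrite ?y_lt ?subn0 ?q_le_y.
apply: orth_submxl (capmxSl _ _) _; apply: orth_sym.
by apply: cyc_orth_gap f_orth _ _; apply/andP; split; lia.
Qed.

Lemma cyc_orth_sample_add : cyc_orth (p - c) (q - e) (sample f p (p - c) (f p.-1 + f 0)%MS).
Proof.
have abE : (q - e) * p = (p - c) * q + 1 by rewrite !mulnBl; nia.
apply: cyc_orth_of_gap => i j /andP[ij j_lt] gap.
have j_gt0 : 0 < j by lia.
have y_lt : j * p %/ (p - c) < p by rewrite ltn_divLR; nia.
rewrite [sample _ _ _ _ j]sample_gt0 //.
have [i0 | i_gt0] := posnP i; last first.
  rewrite sample_gt0 //; apply: cyc_orth_gap f_orth _ _; last exact: floor_gap_lower abE gap.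
  by rewrite y_lt andbT leq_div2r // leq_mul2r ij orbT.
rewrite i0 subn0 in gap *; rewrite /sample /=.
have /andP[y_lo y_hi] := floor_lower_zero abE gap.
apply: orth_addsmxl; last by apply: cyc_orth_gap f_orth _ _; apply/andP; split; lia.
by apply: orth_sym; apply: cyc_orth_gap f_orth _ _; apply/andP; split; lia.
Qed.

End FareySplit.

Lemma sum_rank_cyc_orth d q : forall p (f : nat -> 'M[CC]_d),
  0 < q -> 2 * q <= p -> coprime p q -> cyc_orth p q f ->
  \sum_(0 <= i < p) \rank (f i) <= q * d.
Proof.
elim/ltn_ind: q => q IH p f q_gt0 le_2qp cop_pq f_orth.
have [q_le1 | q_gt1] := leqP q 1.
  have q1 : q = 1 by lia.
  rewrite q1 mul1n in f_orth *; apply: sum_rank_orth => i j /andP[ij j_lt].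
  by apply: cyc_orth_gap f_orth _ _; apply/andP; split; lia.
have [c [e [cqE /andP[e_gt0 e_lt_q]]]] := farey_neighbour q_gt1 cop_pq.
have two_q_lt_p : 2 * q < p.
  rewrite ltn_neqAle le_2qp andbT; apply: contraTneq cop_pq => <-.
  by rewrite /coprime gcdnC gcdnMl; lia.
have c_lt_p : c < p by nia.
have abE : (q - e) * p = (p - c) * q + 1 by rewrite !mulnBl; nia.
have cop_pc : coprime p c.
  by rewrite coprime_sym (@coprime_of_mul_eq_add1 _ q _ e) // cqE mulnC.
have sum_c : \rank (f p.-1 :&: f 0)%MS + \sum_(1 <= j < c) \rank (f (j * p %/ c)) <= e * d.
  rewrite -sum_rank_sample; last by nia.
  apply: IH => //; first by nia.
    exact: coprime_of_mul_eq_add1 cqE.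
  exact: cyc_orth_sample_cap cqE e_gt0 e_lt_q c_lt_p two_q_lt_p f_orth.
have sum_a : \rank (f p.-1 + f 0)%MS + \sum_(1 <= j < p - c) \rank (f (j * p %/ (p - c)))
             <= (q - e) * d.
  rewrite -sum_rank_sample; last by lia.
  apply: IH; rewrite ?subn_gt0 ?ltn_subrL ?e_gt0 ?e_lt_q //; first by nia.
    by rewrite coprime_sym (coprime_of_mul_eq_add1 abE).
  exact: cyc_orth_sample_add cqE e_gt0 e_lt_q c_lt_p two_q_lt_p f_orth.
have c_gt0 : 0 < c by nia.
have a_gt0 : 0 < p - c by rewrite subn_gt0.
have cover := leq_sum_floor_cover (fun i => \rank (f i)) (subnK (ltnW c_lt_p)) cop_pc
  a_gt0 c_gt0.
have cap_sum := mxrank_sum_cap (f p.-1) (f 0).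
have sum_split : \sum_(0 <= i < p) \rank (f i) =
                 \rank (f 0) + (\sum_(1 <= i < p.-1) \rank (f i)) + \rank (f p.-1).
  have p_gt1 : 1 < p by lia.
  rewrite big_ltn 1?ltnW // -addnA -big_nat_recr ?prednK //; lia.
by rewrite sum_split -[q](subnKC (ltnW e_lt_q)) mulnDl; lia.
Qed.

Lemma cyc_orth_divn p q g d (f : nat -> 'M[CC]_d) :
  0 < g -> g %| p -> g %| q -> cyc_orth p q f -> cyc_orth (p %/ g) (q %/ g) (fun i => f (i * g)).
Proof.
move=> g_gt0 /dvdnP[p' ->] /dvdnP[q' ->]; rewrite !mulnK // => f_orth i j ip jp dist_ij.
by apply: f_orth; rewrite ?ltn_pmul2r ?cycdist_mulr ?leq_pmul2r.
Qed.

Lemma cyc_orth_frac_orth_rep n q d r (W : 'I_n.+1 -> 'M[CC]_(r, d)) :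
  0 < q -> @frac_orth_rep n.+1 q d r W -> cyc_orth n.+1 q (fun i => <<W (inord i)>>%MS).
Proof.
move=> q_gt0 [_ W_orth] i j ip jp dist_ij.
apply: (@orth_submxl _ _ _ _ (W (inord i))); first by rewrite genmxE.
apply: (@orth_submxr _ _ _ _ _ (W (inord j))); first by rewrite genmxE.
apply: W_orth.
  apply: contraTneq dist_ij => /(congr1 val); rewrite /= !inordK // => ->.
  by rewrite /cycdist leqnn subnn min0n -ltnNge.
by rewrite /frac_adj negb_and -leqNgt !inordK // dist_ij orbT.
Qed.

Lemma frac_orth_rep_ratio_ge p q d r (W : 'I_p -> 'M[CC]_(r, d)) :
  0 < q -> 2 * q <= p -> @frac_orth_rep p q d r W -> p * r <= q * d.
Proof.
case: p W => [|n] W q_gt0 le_2qp W_rep; first by lia.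
set g := gcdn n.+1 q; have g_gt0 : 0 < g by rewrite gcdn_gt0.
have pE : n.+1 = n.+1 %/ g * g by rewrite divnK // dvdn_gcdl.
have qE : q = q %/ g * g by rewrite divnK // dvdn_gcdr.
have q'_gt0 : 0 < q %/ g by rewrite divn_gt0 // dvdn_leq // dvdn_gcdr.
have le_2q'p' : 2 * (q %/ g) <= n.+1 %/ g by rewrite -(leq_pmul2r g_gt0) -mulnA -qE -pE.
have cop : coprime (n.+1 %/ g) (q %/ g).
  by rewrite /coprime -(eqn_pmul2r g_gt0) muln_gcdl -pE -qE mul1n.
have := cyc_orth_divn g_gt0 (dvdn_gcdl _ _) (dvdn_gcdr _ _) (cyc_orth_frac_orth_rep q_gt0 W_rep).
move=> /(sum_rank_cyc_orth q'_gt0 le_2q'p' cop).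
rewrite (eq_big_nat _ _ (F2 := fun=> r)) => [|i _]; last by rewrite genmxE W_rep.1.
rewrite sum_nat_const_nat subn0 => le_p'r.
by rewrite pE qE mulnAC [q %/ g * g * d]mulnAC leq_mul2r le_p'r orbT.
Qed.

Definition window_mx p q (i : nat) : 'M[CC]_(q, p) :=
  \matrix_(k, x) ((x == (i + k) %% p :> nat)%N%:R)%R.

Lemma window_mx_gram p q i j k l : 0 < p ->
  (window_mx p q i *m ctrmx (window_mx p q j))%R k l = (((i + k) %% p == (j + l) %% p)%N%:R)%R.
Proof.
move=> p_gt0; rewrite !mxE (bigD1 (Ordinal (ltn_pmod (i + k) p_gt0))) //=.
rewrite big1 => [|x x_ne]; first by rewrite !mxE eqxx mul1r conjC_nat addr0 eq_sym.
rewrite !mxE; suff /negbTE-> : x != (i + k) %% p :> nat by rewrite mul0r.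
by apply: contraNneq x_ne => x_eq; apply/eqP; apply: val_inj.
Qed.

Lemma neq_modnD_far p q u v k l :
  u < p -> v < p -> k < q -> l < q -> q <= cycdist p u v -> (u + k) %% p != (v + l) %% p.
Proof.
move=> up vp kq lq; have p_gt0 : 0 < p by lia.
have modE x y : x < p -> y < p -> (x + y) %% p = x + y - (p <= x + y) * p.
  by move=> xp yp; rewrite modnD // !modn_small.
wlog uv : u v k l up vp kq lq / u <= v.
  move=> wlog_uv; case: (leqP u v) => [|vu]; first exact: wlog_uv.
  by rewrite cycdistC eq_sym; apply: wlog_uv => //; apply: ltnW.
rewrite leq_cycdist ?uv // => /andP[lo hi].
by rewrite !modE; lia.
Qed.

Lemma frac_orth_rep_window p q :
  0 < q -> 2 * q <= p -> @frac_orth_rep p q p q (fun i => window_mx p q i).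
Proof.
move=> q_gt0 le_2qp; have p_gt0 : 0 < p by lia.
split=> [i | i j ij].
  apply/eqP; rewrite eqn_leq rank_leq_row /=.
  have gram1 : (window_mx p q i *m ctrmx (window_mx p q i) = 1%:M)%R.
    apply/matrixP => k l; have kp : k < p by have := ltn_ord k; lia.
    have lp : l < p by have := ltn_ord l; lia.
    by rewrite window_mx_gram // !mxE eqn_modDl !modn_small.
  by rewrite -{1}(mxrank1 CC q) -gram1 mxrankM_maxl.
rewrite /frac_adj ij -leqNgt => dist_ij; apply/matrixP => k l.
by rewrite window_mx_gram // mxE (negbTE (neq_modnD_far _ _ _ _ dist_ij)).
Qed.

Unset Implicit Arguments.
Local Open Scope ring_scope.

Theorem lemma13 (p q : nat) (hq : (0 < q)%N) (hpq : (2 * q <= p)%N) :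
  cxif_frac_eq p q ((p%:R : Rdefinitions.R) / q%:R).
Proof.
have ratrE : (p%:R / q%:R : Rdefinitions.R) = ratr (p%:R / q%:R : rat).
  by rewrite fmorph_div /= !ratr_nat.
split=> [_ [_ [[d [r [d_gt0 [r_gt0 [-> [W W_rep]]]]] ->]]] | c lb].
  rewrite ratrE ler_rat ler_pdivrMr ?ltr0n // mulrAC ler_pdivlMr ?ltr0n //.
  by rewrite -!natrM ler_nat [(d * q)%N]mulnC (frac_orth_rep_ratio_ge hq hpq W_rep).
rewrite ratrE; apply: lb; exists (p%:R / q%:R); split=> //.
exists p, q; split; first by lia.
do 2!split=> //.
by exists (fun i => window_mx p q i); apply: frac_orth_rep_window.
Qed.
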